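(* Let $n$ be odd and let $L=\bigoplus_{i\in\mathbb{Z}/n\mathbb{Z}}L_i$ be a $(\mathbb{Z}/n\mathbb{Z})$-graded Lie algebra over a field with $L_0=0$ that satisfies the selective metabelian condition. Let $a_1,a_2,a_3,a_4\in\mathbb{Z}/n\mathbb{Z}$ be such that $(a_1,a_2,a_3)$ is $(-1)$-independent and $a_4\in D(a_1,a_2,a_3)$. Then $$\big[[x_{a_1},x_{a_2}],[x_{a_3},x_{a_4}],x_b\big]=0$$ for all $x_{a_i}\in L_{a_i}$ ($i=1,\dots,4$) and all $x_b\in L_b$ with $b\notin\widetilde D(a_1,a_2,a_3,a_4)$.
   Context: A $(\mathbb{Z}/n\mathbb{Z})$-graded Lie algebra is $L=\bigoplus_{i=0}^{n-1}L_i$ with $[L_i,L_j]\subseteq L_{i+j \bmod n}$. Products $[y_1,y_2,\dots,y_s]$ are left-normed: $[\dots[[y_1,y_2],y_3],\dots,y_s]$. A sequence $(a_1,\dots,a_k)$ of elements of $\mathbb{Z}/n\mathbb{Z}$ is called $(-1)$-dependent if $t_1a_1+\dots+t_ka_k=0$ for some $t_i\in\{0,1\}$ not all zero, and $(-1)$-independent otherwise. For a $(-1)$-independent sequence $(a_1,\dots,a_k)$, $D(a_1,\dots,a_k)$ is the set of all $j\in\mathbb{Z}/n\mathbb{Z}$ such that $(a_1,\dots,a_k,j)$ is $(-1)$-dependent. For any sequence $(b_1,\dots,b_s)$, $\widetilde D(b_1,\dots,b_s)$ is the set of all $u_1b_1+\dots+u_sb_s$ with $u_i\in\{0,\pm1,\pm2\}$.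 $L$ satisfies the selective metabelian condition if $\big[[x_{d_1},x_{d_2}],[x_{d_3},x_{d_4}]\big]=0$ for all $x_{d_i}\in L_{d_i}$ whenever $(d_1,d_2,d_3,d_4)$ is $(-1)$-independent. *)

From HB Require Import structures.
From mathcomp Require Import all_boot all_order all_algebra.
Set Implicit Arguments. Unset Strict Implicit. Unset Printing Implicit Defensive.
Import Order.TTheory GRing.Theory Num.Theory.
Local Open Scope ring_scope.

Section Dep.
Variable G : zmodType.

Definition minus1_dep (s : seq G) : Prop :=
  exists t : seq bool, size t = size s /\ has id t /\ \sum_(x <- mask t s) x = 0.

Definition minus1_indep (s : seq G) : Prop := ~ minus1_dep s.

Definition Dset (s : seq G) (j : G) : Prop := minus1_dep (rcons s j).

Definition Dtilde (s : seq G) (c : G) : Prop :=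
  exists u : seq int, size u = size s /\ all (fun z => (-2 <= z <= 2)%R) u /\
    c = \sum_(p <- zip s u) p.1 *~ p.2.
End Dep.

Section Lie.
Variables (K : fieldType) (V : lmodType K).

Definition is_lie_bracket (br : V -> V -> V) : Prop :=
  [/\ (forall (a : K) x y z, br (a *: x + y) z = a *: br x z + br y z),
      (forall (a : K) x y z, br x (a *: y + z) = a *: br x y + br x z),
      (forall x, br x x = 0) &
      (forall x y z, br (br x y) z + br (br y z) x + br (br z x) y = 0)].

Definition is_grading (G : finZmodType) (br : V -> V -> V) (Lg : G -> V -> Prop)
  : Prop :=
  [/\ (forall g, Lg g 0),
      (forall g (a : K) x y, Lg g x -> Lg g y -> Lg g (a *: x + y)),
      (forall v, exists f : G -> V, (forall g, Lg g (f g)) /\ v = \sum_g f g),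
      (forall f : G -> V, (forall g, Lg g (f g)) -> \sum_g f g = 0 ->
          forall g, f g = 0) &
      (forall g h x y, Lg g x -> Lg h y -> Lg (g + h) (br x y))].

Definition selective_metabelian (G : zmodType) (br : V -> V -> V)
  (Lg : G -> V -> Prop) : Prop :=
  forall d1 d2 d3 d4 : G, minus1_indep [:: d1; d2; d3; d4] ->
  forall x1 x2 x3 x4, Lg d1 x1 -> Lg d2 x2 -> Lg d3 x3 -> Lg d4 x4 ->
    br (br x1 x2) (br x3 x4) = 0.
End Lie.

From HB Require Import structures.
From mathcomp Require Import all_boot all_order all_algebra.
From mathcomp Require Import ring.
Set Implicit Arguments. Unset Strict Implicit. Unset Printing Implicit Defensive.
Import GRing.Theory.
Local Open Scope ring_scope.

(* Write u = [x1, x2] and v = [x3, x4].  Repeated use of the Jacobi identity,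
   with case distinctions on which partial sums of a1, a2, a3, a4 vanish, turns
   [u, v, xb] into a sum of terms each of which either lies in L_0 = 0 or is a
   metabelian product [[y1, y2], [y3, y4]] whose four degrees are sums of
   disjoint blocks of a1, a2, a3, a4, b.  Such a degree sequence is
   (-1)-independent as soon as no nonempty union of blocks sums to 0: unions
   containing b cannot, since b is not in ~D(a1, a2, a3, a4) (coefficients 0
   and -1 suffice), and the others are ruled out by the (-1)-independence of
   (a1, a2, a3) together with the case distinctions.  The bookkeeping rests on
   two facts: (-1)-independence only depends on the multiset of entries, and
   d :: s is (-1)-independent iff s is and -d is not a subset sum of s. *)

Lemma subseq_consP {T : eqType} (x : T) (s u : seq T) :
  subseq u (x :: s) <-> subseq u s \/ exists2 v, u = x :: v & subseq v s.
Proof.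
split=> [|[su|[v -> sv]]]; last by rewrite /= eqxx.
  case: u => [|y v] /=; first by left; apply: sub0seq.
  by case: eqP => [->|_]; [right; exists v | left].
exact: subseq_trans su (subseq_cons s x).
Qed.

Lemma perm_eq_subseq {T : eqType} {s1 s2 u : seq T} :
  perm_eq s1 s2 -> subseq u s1 -> exists2 v, subseq v s2 & perm_eq u v.
Proof.
move=> /permP s12 su; apply/count_subseqP => x.
by rewrite -s12; apply: leq_count_subseq.
Qed.

Section SubsetSums.
Variable G : zmodType.
Implicit Types (s u : seq G) (c d x y : G).

Definition subsum s c : Prop := exists2 u, subseq u s & \sum_(z <- u) z = c.

Lemma subsum_nil c : subsum [::] c <-> c = 0.
Proof.
split=> [[u]|->]; last by exists [::]; rewrite ?big_nil.
by rewrite subseq0 => /eqP-> <-; rewrite big_nil.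
Qed.

Lemma subsum_cons x s c : subsum (x :: s) c <-> subsum s c \/ subsum s (c - x).
Proof.
split=> [[u /subseq_consP[su <-|[v -> sv <-]]]|[[u su <-]|[v sv cx]]].
- by left; exists u.
- by right; exists v; rewrite // big_cons addrAC subrr add0r.
- by exists u => //; apply/subseq_consP; left.
exists (x :: v); first by apply/subseq_consP; right; exists v.
by rewrite big_cons cx addrC subrK.
Qed.

Lemma subsum_subseq s1 s2 c : subseq s1 s2 -> subsum s1 c -> subsum s2 c.
Proof. by move=> s12 [u su <-]; exists u => //; apply: subseq_trans su s12. Qed.

Lemma subsum_perm s1 s2 c : perm_eq s1 s2 -> subsum s1 c -> subsum s2 c.
Proof.
move=> s12 [u /(perm_eq_subseq s12)[v sv uv] <-].
by exists v; rewrite // (perm_big _ uv).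
Qed.

Lemma subsum_merge x y s c : subsum (x + y :: s) c -> subsum (x :: y :: s) c.
Proof.
case/subsum_cons=> sc; apply/subsum_cons; [left|right]; apply/subsum_cons.
  by left.
by right; rewrite -addrA -opprD.
Qed.

Lemma subsum_Dtilde s c : subsum s c -> Dtilde s (- c).
Proof.
elim: s c => [c /subsum_nil->|x s IHs c /subsum_cons[|] /IHs[u [su [u2 e]]]].
- by exists [::]; rewrite oppr0 big_nil.
- by exists (0 :: u); rewrite /= su u2 big_cons mulr0z add0r.
exists (-1 :: u); rewrite /= su u2 big_cons -e; split=> //; split=> //.
by rewrite mulrN1z opprB /= addKr.
Qed.

Lemma minus1_depP s :
  minus1_dep s <-> exists2 u, subseq u s & u != [::] /\ \sum_(z <- u) z = 0.
Proof.
split=> [[t [st [t1 t0]]]|[u /subseqP[t st ->] [u1 u0]]].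
  exists (mask t s); first exact: mask_subseq.
  by rewrite -size_eq0 size_mask // -lt0n -has_count.
by exists t; rewrite has_count lt0n -(size_mask st) size_eq0.
Qed.

Lemma minus1_indep_subseq s1 s2 :
  subseq s1 s2 -> minus1_indep s2 -> minus1_indep s1.
Proof.
move=> s12 ind2 /minus1_depP[u su u0]; apply: ind2.
by apply/minus1_depP; exists u => //; apply: subseq_trans su s12.
Qed.

Lemma minus1_indep_perm s1 s2 :
  perm_eq s1 s2 -> minus1_indep s2 -> minus1_indep s1.
Proof.
move=> s12 ind2 /minus1_depP[u /(perm_eq_subseq s12)[v sv uv] [u1 u0]].
apply: ind2; apply/minus1_depP; exists v => //.
by rewrite -(perm_big _ uv) -size_eq0 -(perm_size uv) size_eq0.
Qed.

Lemma minus1_indep_neq0 s x : minus1_indep s -> x \in s -> x != 0.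
Proof.
move=> ind xs; apply/eqP => x0; apply: ind; apply/minus1_depP.
by exists [:: x]; rewrite ?sub1seq // big_seq1.
Qed.

Lemma minus1_dep_cons d s : minus1_dep (d :: s) <-> minus1_dep s \/ subsum s (- d).
Proof.
split=> [/minus1_depP[u /subseq_consP[su u0|[v -> sv [_]]]]|].
- by left; apply/minus1_depP; exists u.
- by rewrite big_cons addrC => /eqP; rewrite addr_eq0 => /eqP; right; exists v.
case=> [/minus1_depP[u su u0]|[v sv vd]]; apply/minus1_depP.
  by exists u => //; apply/subseq_consP; left.
exists (d :: v); first by apply/subseq_consP; right; exists v.
by rewrite big_cons vd subrr.
Qed.

Lemma minus1_indep_cons d s :
  minus1_indep (d :: s) <-> minus1_indep s /\ ~ subsum s (- d).
Proof.
split=> [ind|[ind nd] /minus1_dep_cons[]//].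
by split=> dep; apply: ind; apply/minus1_dep_cons; [left|right].
Qed.

Lemma minus1_indep_merge x y s :
  minus1_indep (x :: y :: s) -> minus1_indep (x + y :: s).
Proof.
case/minus1_indep_cons=> /minus1_indep_cons[ind _] nx.
apply/minus1_indep_cons; split=> // sxy; apply: nx.
by apply/subsum_cons; right; rewrite -opprD.
Qed.

Lemma minus1_indep3 x y d : minus1_indep [:: x; y] ->
  d != 0 -> x + d != 0 -> y + d != 0 -> x + y + d != 0 -> minus1_indep [:: x; y; d].
Proof.
move=> ind d0 xd yd xyd; apply: (@minus1_indep_perm _ [:: d; x; y]).
  by apply/permP => p /=; ring.
have opp_neq0 e : e + d != 0 -> - d - e != 0 by rewrite -opprD oppr_eq0 addrC.
apply/minus1_indep_cons; split=> //.
case/subsum_cons=> /subsum_cons[|] /subsum_nil /eqP; apply/negP.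
- by rewrite oppr_eq0.
- exact: opp_neq0.
- exact: opp_neq0.
by rewrite -addrA -opprD opp_neq0.
Qed.

End SubsetSums.

Section LieBracket.
Variables (K : fieldType) (V : lmodType K) (br : V -> V -> V).
Hypothesis lie : is_lie_bracket br.

Lemma brDl x y z : br (x + y) z = br x z + br y z.
Proof. by case: lie => linl _ _ _; have := linl 1 x y z; rewrite !scale1r. Qed.

Lemma brDr x y z : br x (y + z) = br x y + br x z.
Proof. by case: lie => _ linr _ _; have := linr 1 x y z; rewrite !scale1r. Qed.

Lemma br0l x : br 0 x = 0.
Proof. by apply: (addrI (br 0 x)); rewrite -brDl !addr0. Qed.

Lemma br0r x : br x 0 = 0.
Proof. by apply: (addrI (br x 0)); rewrite -brDr !addr0. Qed.

Lemma brNl x y : br (- x) y = - br x y.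
Proof. by apply/eqP; rewrite -addr_eq0 -brDl addNr br0l. Qed.

Lemma brNr x y : br x (- y) = - br x y.
Proof. by apply/eqP; rewrite -addr_eq0 -brDr addNr br0r. Qed.

Lemma br_anticomm x y : br x y = - br y x.
Proof.
case: lie => _ _ alt _; apply/eqP; rewrite -addr_eq0.
by have := alt (x + y); rewrite brDl !brDr !alt add0r addr0 => ->.
Qed.

Lemma br_leibnizl x y z : br (br x y) z = br (br x z) y + br x (br y z).
Proof.
case: lie => _ _ _ /(_ x y z).
rewrite [br (br y z) x]br_anticomm [br z x]br_anticomm brNl => /eqP.
by rewrite -addrA -opprD subr_eq0 addrC => /eqP.
Qed.

Lemma br_leibnizr x y z : br z (br x y) = br (br z x) y + br x (br z y).
Proof.
rewrite br_anticomm br_leibnizl opprD [br z x]br_anticomm [br z y]br_anticomm.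
by rewrite brNl brNr.
Qed.

Section Graded.
Variables (G : zmodType) (Lg : G -> V -> Prop).
Hypothesis Lg_br : forall g h x y, Lg g x -> Lg h y -> Lg (g + h) (br x y).
Hypothesis Lg0 : forall x, Lg 0 x -> x = 0.
Hypothesis metab : selective_metabelian br Lg.

Lemma Lg_eq0 g x : Lg g x -> g = 0 -> x = 0.
Proof. by move=> + g0; rewrite g0; apply: Lg0. Qed.

Lemma metabelian_br d1 d2 d3 d4 d s y1 y2 y3 y4 :
  perm_eq [:: d1; d2; d3; d4] (d :: s) -> minus1_indep s -> ~ subsum s (- d) ->
  Lg d1 y1 -> Lg d2 y2 -> Lg d3 y3 -> Lg d4 y4 -> br (br y1 y2) (br y3 y4) = 0.
Proof.
move=> perm_d ind nd; apply: metab; apply: minus1_indep_perm perm_d _.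
exact/minus1_indep_cons.
Qed.

Section Vanishing.
Variables (a1 a2 a3 a4 b : G) (x1 x2 x3 x4 xb : V).
Hypotheses (L1 : Lg a1 x1) (L2 : Lg a2 x2) (L3 : Lg a3 x3) (L4 : Lg a4 x4).
Hypothesis Lb : Lg b xb.
Hypothesis ind123 : minus1_indep [:: a1; a2; a3].
Hypothesis b_avoid : ~ subsum [:: a1; a2; a3; a4] (- b).

Section NonDegenerate.
Hypotheses (a4_neq0 : a4 != 0) (a34_neq0 : a3 + a4 != 0).

Lemma brpbq_br34_eq0 p q y z :
  Lg p y -> Lg q z -> minus1_indep [:: p; q; a3] ->
  ~ subsum [:: p; q; a3; a4] (- b) -> p + q + a4 = 0 ->
  (p + a3 + a4 != 0) || (q + a3 + a4 != 0) ->
  br (br (br y xb) z) (br x3 x4) = 0.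
Proof.
move=> Ly Lz ind_pq3 b_avoid_pq pq4 p34_q34.
have pa4 : p + a4 = - q by apply/eqP; rewrite -subr_eq0 opprK addrAC pq4.
have qa4 : q + a4 = - p by apply/eqP; rewrite -subr_eq0 opprK addrAC (addrC q) pq4.
have [q34|q34] := eqVneq (q + a3 + a4) 0.
  rewrite br_leibnizl (Lg_eq0 (Lg_br Lz (Lg_br L3 L4))); last by rewrite addrA.
  suff -> : br (br y xb) (br x3 x4) = 0 by rewrite br0r addr0 br0l.
  apply: (metabelian_br (d := b) (s := [:: p; a3; a4])) Ly Lb L3 L4.
  - by apply/permP => r /=; ring.
  - apply: minus1_indep3 => //.
    + apply: minus1_indep_subseq ind_pq3.
      by apply/subseqP; exists [:: true; false; true].
    + by rewrite pa4 oppr_eq0 (minus1_indep_neq0 ind_pq3) // !inE eqxx orbT.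
    + by move: p34_q34; rewrite q34 eqxx orbF.
  move=> sb; apply: b_avoid_pq; apply: subsum_subseq sb.
  by apply/subseqP; exists [:: true; false; true; true].
apply: (metabelian_br (d := p + b) (s := [:: q; a3; a4])) (Lg_br Ly Lb) Lz L3 L4.
- by apply/permP => r /=; ring.
- apply: minus1_indep3 => //.
    exact: minus1_indep_subseq (subseq_cons _ _) ind_pq3.
  by rewrite qa4 oppr_eq0 (minus1_indep_neq0 ind_pq3) // !inE eqxx.
move=> sb; apply: b_avoid_pq; apply/subsum_cons; right.
by rewrite addrC -opprD.
Qed.

Hypothesis sum_neq0 : a1 + a2 + a3 + a4 != 0.

Lemma minus1_indep_12_3_4 : a1 + a2 + a4 != 0 -> minus1_indep [:: a1 + a2; a3; a4].
Proof. by move=> a124; apply: minus1_indep3 => //; apply: minus1_indep_merge. Qed.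

Lemma br12_br34b_eq0 : br (br x1 x2) (br (br x3 x4) xb) = 0.
Proof.
have L12 := Lg_br L1 L2.
rewrite (br_leibnizl x3 x4 xb) brDr br_leibnizr.
have -> : br (br x1 x2) (br x3 xb) = 0.
  apply: (metabelian_br (d := b) (s := [:: a1; a2; a3])) L1 L2 L3 Lb => //.
    by apply/permP => r /=; ring.
  move=> sb; apply: b_avoid; apply: subsum_subseq sb.
  by apply/subseqP; exists [:: true; true; true; false].
have -> : br (br x3 xb) (br (br x1 x2) x4) = 0.
  have [a124|a124] := eqVneq (a1 + a2 + a4) 0.
    by rewrite (Lg_eq0 (Lg_br L12 L4)) // br0r.
  apply: (metabelian_br (d := b) (s := [:: a1 + a2; a3; a4])) L3 Lb L12 L4.
  - by apply/permP => r /=; ring.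
  - exact: minus1_indep_12_3_4.
  by move/subsum_merge.
have -> : br (br x1 x2) (br x3 (br x4 xb)) = 0.
  apply: (metabelian_br (d := a4 + b) (s := [:: a1; a2; a3]))
    L1 L2 L3 (Lg_br L4 Lb) => //.
    by apply/permP => r /=; ring.
  move=> sb; apply: b_avoid; apply: (@subsum_perm _ [:: a4; a1; a2; a3]).
    by apply/permP => r /=; ring.
  by apply/subsum_cons; right; rewrite addrC -opprD.
by rewrite br0l !addr0.
Qed.

Hypothesis a134_a234 : (a1 + a3 + a4 != 0) || (a2 + a3 + a4 != 0).

Lemma br12b_br34_eq0 : br (br (br x1 x2) xb) (br x3 x4) = 0.
Proof.
have [a124|a124] := eqVneq (a1 + a2 + a4) 0; last first.
  apply: (metabelian_br (d := b) (s := [:: a1 + a2; a3; a4])) (Lg_br L1 L2) Lb L3 L4.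
  - by apply/permP => r /=; ring.
  - exact: minus1_indep_12_3_4.
  by move/subsum_merge.
have perm21 s : perm_eq [:: a2, a1 & s] [:: a1, a2 & s].
  by apply/permP => r /=; ring.
rewrite (br_leibnizl x1 x2 xb) brDl (brpbq_br34_eq0 L1 L2) // add0r.
rewrite [br x1 _]br_anticomm brNl (brpbq_br34_eq0 L2 L1) ?oppr0 //.
- exact: minus1_indep_perm (perm21 _) ind123.
- by move/(subsum_perm (perm21 _)).
- by rewrite (addrC a2).
by rewrite orbC.
Qed.

End NonDegenerate.

Lemma br_br12_br34_b_eq0 : br (br (br x1 x2) (br x3 x4)) xb = 0.
Proof.
have [a40|a4_neq0] := eqVneq a4 0.
  by rewrite (Lg_eq0 L4 a40) !br0r br0l.
have L34 := Lg_br L3 L4.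
have [a340|a34_neq0] := eqVneq (a3 + a4) 0.
  by rewrite (Lg_eq0 L34 a340) br0r br0l.
have [sum0|sum_neq0] := eqVneq (a1 + a2 + a3 + a4) 0.
  by rewrite (Lg_eq0 (Lg_br (Lg_br L1 L2) L34)) ?br0l // addrA.
have [/andP[/eqP a134 /eqP a234]|a134_a234] :=
  boolP ((a1 + a3 + a4 == 0) && (a2 + a3 + a4 == 0)).
  rewrite [br (br x1 x2) _]br_leibnizl.
  rewrite (Lg_eq0 (Lg_br L1 L34)) ?(Lg_eq0 (Lg_br L2 L34)); try by rewrite addrA.
  by rewrite br0l br0r addr0 br0l.
rewrite br_leibnizl br12b_br34_eq0 ?br12_br34b_eq0 ?addr0 //.
by rewrite -negb_and.
Qed.

End Vanishing.
End Graded.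
End LieBracket.

(* Z/nZ is 'I_m.+1 with n = m.+1. *)
Theorem lemma1 (m : nat) (K : fieldType) (V : lmodType K) (br : V -> V -> V)
  (Lg : 'I_m.+1 -> V -> Prop) :
  odd m.+1 ->
  is_lie_bracket br ->
  is_grading br Lg ->
  (forall x, Lg 0 x -> x = 0) ->
  selective_metabelian br Lg ->
  forall a1 a2 a3 a4 b : 'I_m.+1,
  minus1_indep [:: a1; a2; a3] ->
  Dset [:: a1; a2; a3] a4 ->
  ~ Dtilde [:: a1; a2; a3; a4] b ->
  forall x1 x2 x3 x4 xb,
  Lg a1 x1 -> Lg a2 x2 -> Lg a3 x3 -> Lg a4 x4 -> Lg b xb ->
  br (br (br x1 x2) (br x3 x4)) xb = 0.
Proof.
move=> _ lie [_ _ _ _ Lg_br] Lg0 metab a1 a2 a3 a4 b ind123 _ b_notin.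
move=> x1 x2 x3 x4 xb L1 L2 L3 L4 Lb.
apply: (br_br12_br34_b_eq0 lie Lg_br Lg0 metab L1 L2 L3 L4 Lb ind123).
by move/subsum_Dtilde; rewrite opprK.
Qed.
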